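(* Let $\mathcal V$ be a variety, $A\in\mathcal V$ and $\alpha,\beta\in\operatorname{Con}A$. \begin{enumerate} \item If $\mathcal V$ has a difference term, then for all $a,b,d\in A$ with $(a,b),(a,d)\in\alpha$: if $\big((a,b),(a,d)\big)\in\Delta_{\alpha\beta}$ then $(b,d)\in[\alpha,\beta]$. \item If $\mathcal V$ has a weak-difference term and $\alpha$ is abelian, then for all $b,d\in A$: there exists $a\in A$ with $(a,b),(a,d)\in\alpha$ and $\big((a,b),(a,d)\big)\in\Delta_{\alpha\beta}$ if and only if $(b,d)\in[\beta,\alpha]$. \item If $\mathcal V$ has a weak-difference term and $\alpha$ is abelian, then $\Delta_{\alpha\alpha}=\Delta_{\alpha\gamma}\wedge\hat\alpha$ for every $\gamma\in\operatorname{Con}A$ with $\alpha\le\gamma\le(0:\alpha)$. \item If $\mathcal V$ has a difference term $m$ and $\alpha$ is abelian, then for all $(a,b),(c,d)\in\alpha$ the following are equivalent: (a) $\big((a,b),(c,d)\big)\in\Delta_{\alpha\beta}$; (b) $\big((a,b),(c,m(b,a,c))\big)\in\Delta_{\alpha\beta}$ and $(d,m(b,a,c))\in[\alpha,\beta]$; (c) $(c,a)\in\beta$, $(a,b)\in\alpha$, and $(d,m(b,a,c))\in[\alpha,\beta]$. \end{enumerate}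
   Context: All algebras are in the sense of universal algebra. For an algebra $A$ and $\alpha,\beta\in\operatorname{Con}A$, $[\alpha,\beta]$ denotes the term-condition (TC) commutator; $0$ denotes the equality relation and $1$ the total relation. A congruence $\alpha$ is abelian if $[\alpha,\alpha]=0$. $A(\alpha)=\{(x,y)\in A\times A:(x,y)\in\alpha\}$ is the congruence $\alpha$ viewed as a subalgebra of $A\times A$. $\Delta_{\alpha\beta}$ is the congruence of $A(\alpha)$ generated by $\{((u,u),(v,v)):(u,v)\in\beta\}$. $\hat\alpha$ is the equivalence relation on $A(\alpha)$ given by $(x,y)\mathrel{\hat\alpha}(u,v)$ iff $x,y,u,v$ all lie in one $\alpha$-class. $(0:\alpha)$ denotes the centralizer of $\alpha$, the largest congruence $\gamma$ with $[\gamma,\alpha]=0$. A variety $\mathcal V$ has a difference term if there is a ternary term $d$ such that for every $A\in\mathcal V$, $\theta\in\operatorname{Con}A$ and $(a,b)\in\theta$: $d(a,a,b)=b$ and $(d(a,b,b),a)\in[\theta,\theta]$. It has a weak-difference term if there is a ternary term $d$ such that for all such $A,\theta,(a,b)$: $(d(a,a,b),b)\in[\theta,\theta]$ and $(b,d(b,a,a))\in[\theta,\theta]$. *)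

From mathcomp Require Import all_boot.
Set Implicit Arguments.
Unset Strict Implicit.
Unset Printing Implicit Defensive.

Section UA.
Variable F : Type.
Variable ar : F -> nat.

Record algebra := Algebra {
  carrier :> Type;
  op : forall f : F, ('I_(ar f) -> carrier) -> carrier
}.

Inductive term (V : Type) : Type :=
| Var : V -> term V
| App : forall f : F, ('I_(ar f) -> term V) -> term V.

Fixpoint eval (A : algebra) (V : Type) (env : V -> A) (t : term V) : A :=
  match t with
  | Var v => env v
  | App f args => @op A f (fun i => eval env (args i))
  end.

(* A variety, presented as the class of models of a set of identities
   (Birkhoff's HSP theorem). *)
Definition identities := term nat -> term nat -> Prop.
Definition in_variety (E : identities) (A : algebra) : Prop :=
  forall s t, E s t -> forall env : nat -> A, eval env s = eval env t.

Record is_con (A : algebra) (th : A -> A -> Prop) : Prop := IsCon {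
  con_refl : forall x, th x x;
  con_sym : forall x y, th x y -> th y x;
  con_trans : forall x y z, th x y -> th y z -> th x z;
  con_compat : forall f (x y : 'I_(ar f) -> A),
      (forall i, th (x i) (y i)) -> th (@op A f x) (@op A f y)
}.

Definition Cg (A : algebra) (X : A -> A -> Prop) (x y : A) : Prop :=
  forall th, is_con th -> (forall u v, X u v -> th u v) -> th x y.

(* Term condition C(alpha, beta; delta): x-variables are inl, y-variables inr *)
Definition TC (A : algebra) (al be de : A -> A -> Prop) : Prop :=
  forall (t : term (nat + nat)%type) (a b c d : nat -> A),
    (forall n, al (a n) (b n)) -> (forall n, be (c n) (d n)) ->
    de (eval (fun v => match v with inl n => a n | inr n => c n end) t)
       (eval (fun v => match v with inl n => a n | inr n => d n end) t) ->
    de (eval (fun v => match v with inl n => b n | inr n => c n end) t)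
       (eval (fun v => match v with inl n => b n | inr n => d n end) t).

Definition comm (A : algebra) (al be : A -> A -> Prop) (x y : A) : Prop :=
  forall de, is_con de -> TC al be de -> de x y.

Definition abelian (A : algebra) (al : A -> A -> Prop) : Prop :=
  forall x y, comm al al x y -> x = y.

Definition centralizer (A : algebra) (al : A -> A -> Prop) (x y : A) : Prop :=
  exists ga, is_con ga /\ (forall u v, comm ga al u v -> u = v) /\ ga x y.

Definition Acar (A : algebra) (al : A -> A -> Prop) := {p : A * A | al p.1 p.2}.

Definition Aop (A : algebra) (al : A -> A -> Prop) (Hal : is_con al)
  (f : F) (args : 'I_(ar f) -> Acar al) : Acar al :=
  exist (fun p : A * A => al p.1 p.2)
    (@op A f (fun i => (sval (args i)).1), @op A f (fun i => (sval (args i)).2))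
    (con_compat Hal (fun i => svalP (args i))).

Definition Aalpha (A : algebra) (al : A -> A -> Prop) (Hal : is_con al)
  : algebra := @Algebra (Acar al) (Aop Hal).

Definition Delta (A : algebra) (al : A -> A -> Prop) (Hal : is_con al)
  (be : A -> A -> Prop) : Aalpha Hal -> Aalpha Hal -> Prop :=
  @Cg (Aalpha Hal) (fun p q : Acar al =>
      (sval p).1 = (sval p).2 /\ (sval q).1 = (sval q).2 /\
      be (sval p).1 (sval q).1).

Definition alphahat (A : algebra) (al : A -> A -> Prop) (Hal : is_con al)
  (p q : Aalpha Hal) : Prop :=
  let: (x, y) := sval p in let: (u, v) := sval q in
  [/\ al x y, al x u & al x v].

Definition app3 (A : algebra) (d : term 'I_3) (x y z : A) : A :=
  eval (fun i : 'I_3 => match val i with 0 => x | 1 => y | _ => z end) d.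

Definition is_difference_term (E : identities) (d : term 'I_3) : Prop :=
  forall B : algebra, in_variety E B ->
  forall th : B -> B -> Prop, is_con th -> forall a b : B, th a b ->
    app3 d a a b = b /\ comm th th (app3 d a b b) a.

Definition is_weak_difference_term (E : identities) (d : term 'I_3) : Prop :=
  forall B : algebra, in_variety E B ->
  forall th : B -> B -> Prop, is_con th -> forall a b : B, th a b ->
    comm th th (app3 d a a b) b /\ comm th th b (app3 d b a a).

Definition has_difference_term E := exists d, is_difference_term E d.
Definition has_weak_difference_term E := exists d, is_weak_difference_term E d.

End UA.

Arguments Var {F ar V}.
Arguments Delta {F ar A al} Hal be _ _.
Arguments alphahat {F ar A al Hal} _ _.
Arguments Aalpha {F ar A al} Hal.

(* The proof rests on one structural fact about Delta_{alpha beta}: it is the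
   least equivalence relation on A(alpha) containing all pairs
   ((p(u),p'(u)), (p(v),p'(v))) with u beta v, where (p,p') is a unary
   polynomial of A(alpha), i.e. a term T(x,y) with alpha-related parameter
   tuples e, f plugged in for x (lemma [Delta_ind]).  Consequently every
   property of pairs that such polynomial moves preserve is preserved along
   Delta; combined with the term condition this transfers commutator
   relations along Delta ([Delta_transfer]).

   When a term d is a Mal'tsev operation on the alpha-classes (which follows
   from a weak difference term and abelianness of alpha), the relation
   y ~ w :<-> (y,y) Delta (y,w) is a congruence centralising alpha against
   beta in both orders; hence it contains [alpha,beta] and [beta,alpha]. *)
From mathcomp Require Import all_boot.
From Stdlib Require Import FunctionalExtensionality ProofIrrelevance Setoid.
Set Implicit Arguments.
Unset Strict Implicit.
Unset Printing Implicit Defensive.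

Section Terms.
Variables (F : Type) (ar : F -> nat).

Fixpoint tsubst (V W : Type) (s : V -> term ar W) (t : term ar V) : term ar W :=
  match t with
  | Var v => s v
  | App f args => App (fun i => tsubst s (args i))
  end.

Lemma eval_subst (A : algebra ar) V W (s : V -> term ar W) (env : W -> A) t :
  eval env (tsubst s t) = eval (fun v => eval env (s v)) t.
Proof.
elim: t => [v|f args IH] //=.
by congr op; apply: functional_extensionality => i; exact: IH.
Qed.

Lemma eval_ext (A : algebra ar) V (e1 e2 : V -> A) t :
  (forall v, e1 v = e2 v) -> eval e1 t = eval e2 t.
Proof. by move=> H; rewrite (functional_extensionality _ _ H). Qed.

Definition env2 (A : Type) V W (e : V -> A) (x : W -> A) : V + W -> A :=
  fun s => match s with inl v => e v | inr w => x w end.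

Lemma eval_con (A : algebra ar) (th : A -> A -> Prop) (Hth : is_con th) V
  (x y : V -> A) t : (forall v, th (x v) (y v)) -> th (eval x t) (eval y t).
Proof.
move=> Hv; elim: t => [v|f args IH] //=.
exact: (con_compat Hth).
Qed.

Definition sel3 (X : Type) (x y z : X) (i : 'I_3) : X :=
  match val i with 0 => x | 1 => y | _ => z end.

Lemma eval_app3 (A : algebra ar) W (d : term ar 'I_3) (t1 t2 t3 : term ar W)
  (env : W -> A) :
  eval env (tsubst (sel3 t1 t2 t3) d)
  = app3 d (eval env t1) (eval env t2) (eval env t3).
Proof.
rewrite eval_subst /app3; apply: eval_ext => i.
by rewrite /sel3; case: (val i) => [|[|?]].
Qed.

Lemma app3_con (A : algebra ar) (th : A -> A -> Prop) (Hth : is_con th) d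
  x y z x' y' z' :
  th x x' -> th y y' -> th z z' -> th (app3 d x y z) (app3 d x' y' z').
Proof.
move=> H1 H2 H3; apply: (eval_con Hth) => i.
by case: (val i) => [|[|?]].
Qed.

End Terms.

Section Commutator.
Variables (F : Type) (ar : F -> nat) (A : algebra ar).

(* The term condition, stated with nat-indexed variables, holds for terms
   over any countable sets of variables (by renaming through [pickle]). *)
Lemma TC_countable (al be de : A -> A -> Prop)
  (ral : forall x, al x x) (rbe : forall x, be x x)
  (V W : countType) (t : term ar (V + W)) (a b : V -> A) (c d : W -> A) :
  TC al be de -> (forall v, al (a v) (b v)) -> (forall w, be (c w) (d w)) ->
  de (eval (env2 a c) t) (eval (env2 a d) t) ->
  de (eval (env2 b c) t) (eval (env2 b d) t).
Proof.
move=> HTC Hab Hcd.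
pose x0 := eval (env2 a c) t.
pose ren (s : V + W) : term ar (nat + nat) :=
  match s with inl v => Var (inl (pickle v)) | inr w => Var (inr (pickle w)) end.
pose lift (U : countType) (g : U -> A) (n : nat) := odflt x0 (omap g (unpickle n)).
have Elift g h : eval (env2 (lift V g) (lift W h)) (tsubst ren t) = eval (env2 g h) t.
  by rewrite eval_subst; apply: eval_ext => -[v|w]; rewrite /= /lift pickleK.
have := HTC (tsubst ren t) (lift V a) (lift V b) (lift W c) (lift W d).
rewrite !Elift; apply.
- by move=> n; rewrite /lift; case: (unpickle n).
- by move=> n; rewrite /lift; case: (unpickle n).
Qed.

Lemma TC_unary (ga al de : A -> A -> Prop)
  (rga : forall x, ga x x) (ral : forall x, al x x) :
  TC ga al de ->
  forall (V : countType) (T : term ar (V + unit)) (e f : V -> A) u v,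
  (forall x, al (e x) (f x)) -> ga u v ->
  de (eval (env2 e (fun _ => u)) T) (eval (env2 f (fun _ => u)) T) ->
  de (eval (env2 e (fun _ => v)) T) (eval (env2 f (fun _ => v)) T).
Proof.
move=> HTC V T e f u v Hef Huv.
pose swap (s : V + unit) : term ar (unit + V) :=
  match s with inl x => Var (inr x) | inr _ => Var (inl tt) end.
have Eswap (g : V -> A) w :
    eval (env2 (fun _ => w) g) (tsubst swap T) = eval (env2 g (fun _ => w)) T.
  by rewrite eval_subst; apply: eval_ext => -[x|[]].
have := TC_countable (t := tsubst swap T) (a := fun _ => u) (b := fun _ => v)
  rga ral HTC (fun _ => Huv) Hef.
by rewrite !Eswap.
Qed.

Lemma comm_con (al be : A -> A -> Prop) : is_con (comm al be).
Proof.
split.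
- by move=> x de Hde _; exact: (con_refl Hde).
- by move=> x y H de Hde HT; apply: (con_sym Hde); apply: H.
- by move=> x y z H1 H2 de Hde HT; exact: (con_trans Hde (H1 _ Hde HT) (H2 _ Hde HT)).
- by move=> f x y H de Hde HT; apply: (con_compat Hde) => i; apply: H.
Qed.

Lemma comm_TC (al be : A -> A -> Prop) : TC al be (comm al be).
Proof.
move=> t a b c d Hab Hcd H de Hde HT.
by apply: (HT t a b c d Hab Hcd); apply: H.
Qed.

Lemma comm_mono (th al be : A -> A -> Prop) :
  (forall x y, th x y -> al x y) -> (forall x y, th x y -> be x y) ->
  forall x y, comm th th x y -> comm al be x y.
Proof.
move=> H1 H2 x y H de Hde HT; apply: H => // t a b c d Hab Hcd.
by apply: HT => n; [apply: H1|apply: H2].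
Qed.

Lemma Cg_con (X : A -> A -> Prop) : is_con (Cg X).
Proof.
split.
- by move=> x th Hth _; exact: (con_refl Hth).
- by move=> x y H th Hth HX; apply: (con_sym Hth); apply: H.
- by move=> x y z H1 H2 th Hth HX; exact: (con_trans Hth (H1 _ Hth HX) (H2 _ Hth HX)).
- by move=> f x y H th Hth HX; apply: (con_compat Hth) => i; apply: H.
Qed.

Lemma Cg_gen (X : A -> A -> Prop) x y : X x y -> Cg X x y.
Proof. by move=> H th _ HX; apply: HX. Qed.

Lemma Cg_mono (X Y : A -> A -> Prop) : (forall x y, X x y -> Y x y) ->
  forall x y, Cg X x y -> Cg Y x y.
Proof. by move=> HXY x y H th Hth HY; apply: H => // u v /HXY; apply: HY. Qed.

Lemma con_total : is_con (A := A) (fun _ _ => True).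
Proof. by []. Qed.

Lemma con_meet (al be : A -> A -> Prop) : is_con al -> is_con be ->
  is_con (fun x y => al x y /\ be x y).
Proof.
move=> Ha Hb; split.
- by move=> x; split; [exact: (con_refl Ha)|exact: (con_refl Hb)].
- by move=> x y [? ?]; split; [exact: (con_sym Ha)|exact: (con_sym Hb)].
- move=> x y z [H1 H2] [H3 H4].
  by split; [exact: (con_trans Ha H1 H3)|exact: (con_trans Hb H2 H4)].
- by move=> f x y H; split; [apply: (con_compat Ha)|apply: (con_compat Hb)] => i; case: (H i).
Qed.

Lemma TC_eq_of_centralizing (ga al : A -> A -> Prop) :
  (forall u v, comm ga al u v -> u = v) -> TC ga al eq.
Proof.
move=> H t a b c e Hab Hce Eq; apply: H.
apply: (comm_TC Hab Hce).
by rewrite Eq; exact: (con_refl (comm_con _ _)).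
Qed.

End Commutator.

Section Translations.
Variables (F : Type) (ar : F -> nat).

Definition upd (X : Type) n (c : 'I_n -> X) (i : 'I_n) (x : X) : 'I_n -> X :=
  fun j => if j == i then x else c j.

(* Change the arguments one at a time. *)
Lemma translation_closed_compat (B : algebra ar) (th : B -> B -> Prop) :
  (forall x, th x x) -> (forall x y z, th x y -> th y z -> th x z) ->
  (forall f (c : 'I_(ar f) -> B) i x y,
     th x y -> th (op (upd c i x)) (op (upd c i y))) ->
  forall f (x y : 'I_(ar f) -> B), (forall i, th (x i) (y i)) ->
  th (op x) (op y).
Proof.
move=> thR thT thU f x y Hxy.
pose mix k (j : 'I_(ar f)) := if val j < k then y j else x j.
have mix_x k (Hk : k < ar f) : mix k = upd (mix k) (Ordinal Hk) (x (Ordinal Hk)).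
  apply: functional_extensionality => j; rewrite /mix /upd.
  by case: eqP => [->|] //=; rewrite ltnn.
have mix_y k (Hk : k < ar f) : mix k.+1 = upd (mix k) (Ordinal Hk) (y (Ordinal Hk)).
  apply: functional_extensionality => j; rewrite /mix /upd.
  case: (eqVneq j (Ordinal Hk)) => [->|Hjk] /=; first by rewrite ltnSn.
  rewrite ltnS leq_eqVlt; case: eqVneq => //= Ejk.
  by case/eqP: Hjk; apply: val_inj.
have Hmix k : k <= ar f -> th (op x) (op (mix k)).
  elim: k => [|k IH] Hk.
    by have -> : mix 0 = x by apply: functional_extensionality.
  apply: thT (IH (ltnW Hk)) _.
  by rewrite (mix_x _ Hk) mix_y; apply: thU.
have -> : y = mix (ar f).
  by apply: functional_extensionality => j; rewrite /mix ltn_ord.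
exact: Hmix.
Qed.

End Translations.

Section DeltaInduction.
Variables (F : Type) (ar : F -> nat) (A : algebra ar).
Variables (al : A -> A -> Prop) (Hal : is_con al).

(* The image of the pair P under the unary polynomial of A(alpha) given by
   the term T(x, y) with the alpha-related parameter tuples e, f for x. *)
Definition evp (V : countType) (T : term ar (V + unit)) (e f : V -> A)
  (P : A * A) : A * A :=
  (eval (env2 e (fun _ => P.1)) T, eval (env2 f (fun _ => P.2)) T).

Variable R : A * A -> A * A -> Prop.
Hypotheses (Rrefl : forall P, R P P) (Rsym : forall P Q, R P Q -> R Q P)
  (Rtrans : forall P Q S, R P Q -> R Q S -> R P S).

Definition poly_stable (p q : Aalpha Hal) : Prop :=
  forall (V : countType) T (e f : V -> A), (forall x, al (e x) (f x)) ->
  R (evp T e f (sval p)) (evp T e f (sval q)).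

(* A basic translation of A(alpha) followed by a unary polynomial is again
   a unary polynomial, with the other arguments c as new parameters. *)
Lemma poly_stable_translation f0 (c : 'I_(ar f0) -> Acar al) i
  (P Q : Aalpha Hal) :
  poly_stable P Q -> poly_stable (Aop Hal (upd c i P)) (Aop Hal (upd c i Q)).
Proof.
move=> HPQ V T e f Hef.
pose sig (s : V + unit) : term ar ((V + 'I_(ar f0)) + unit) :=
  match s with
  | inl v => Var (inl (inl v))
  | inr _ => App (fun j => if j == i then Var (inr tt) else Var (inl (inr j)))
  end.
pose par (g : V -> A) (k : A * A -> A) (s : V + 'I_(ar f0)) :=
  match s with inl v => g v | inr j => k (sval (c j)) end.
have Hpar : forall x, al (par e fst x) (par f snd x).
  by move=> [x|j]; [exact: Hef|exact: (svalP (c j))].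
have Esig (g : V -> A) (k : A * A -> A) (X : Aalpha Hal) :
    eval (env2 (par g k) (fun _ => k (sval X))) (tsubst sig T)
    = eval (env2 g (fun _ => op (fun j => k (sval (upd c i X j))))) T.
  rewrite eval_subst; apply: eval_ext => -[v|[]] //=.
  by congr op; apply: functional_extensionality => j; rewrite /upd; case: (j == i).
by have := HPQ _ (tsubst sig T) _ _ Hpar; rewrite /evp /= !Esig.
Qed.

Lemma poly_stable_con : is_con poly_stable.
Proof.
split.
- by move=> p V T e f Hef; apply: Rrefl.
- by move=> p q Hpq V T e f Hef; apply: Rsym; apply: Hpq.
- by move=> p q s H1 H2 V T e f Hef; exact: Rtrans (H1 V T e f Hef) (H2 V T e f Hef).
- apply: (translation_closed_compat (B := Aalpha Hal)).
  + by move=> p V T e f Hef; apply: Rrefl.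
  + by move=> p q s H1 H2 V T e f Hef; exact: Rtrans (H1 V T e f Hef) (H2 V T e f Hef).
  + by move=> f0 c i p q; apply: poly_stable_translation.
Qed.

(* Induction principle for Delta_{alpha beta}: an equivalence relation on
   pairs which relates the polynomial images of every generator
   ((u,u), (v,v)), u beta v, contains Delta_{alpha beta}.  (The identity
   polynomial recovers the pairs themselves.) *)
Lemma Delta_ind (be : A -> A -> Prop) :
  (forall (V : countType) (T : term ar (V + unit)) (e f : V -> A) u v,
     (forall x, al (e x) (f x)) -> be u v ->
     R (evp T e f (u, u)) (evp T e f (v, v))) ->
  forall p q : Aalpha Hal, Delta Hal be p q -> R (sval p) (sval q).
Proof.
move=> Rgen p q Hpq.
have : poly_stable p q.
  apply: Hpq; first exact: poly_stable_con.
  move=> [[u1 u2] Hu] [[v1 v2] Hv] /= [Eu [Ev Huv]] V T e f Hef.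
  by rewrite /evp /= -Eu -Ev; exact: Rgen.
move/(_ void (Var (inr tt)) (fun x => match x with end) (fun x => match x with end)).
by case: (sval p) (sval q) => [? ?] [? ?]; apply; case.
Qed.

End DeltaInduction.

Section DeltaQuadruples.
Variables (F : Type) (ar : F -> nat) (A : algebra ar).
Variables (al : A -> A -> Prop) (Hal : is_con al).

(* ((x,y), (z,w)) in Delta_{al be}, with the membership proofs of (x,y) and
   (z,w) in A(al) hidden (they are irrelevant, see [DeltaQ_iff]). *)
Definition DeltaQ (be : A -> A -> Prop) (x y z w : A) : Prop :=
  exists (H : al x y) (H' : al z w),
    Delta Hal be (exist (fun p : A * A => al p.1 p.2) (x, y) H)
                 (exist (fun p : A * A => al p.1 p.2) (z, w) H').

Variable be : A -> A -> Prop.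

Lemma DeltaQ_iff x y z w (H : al x y) (H' : al z w) :
  Delta Hal be (exist (fun p : A * A => al p.1 p.2) (x, y) H)
               (exist (fun p : A * A => al p.1 p.2) (z, w) H')
  <-> DeltaQ be x y z w.
Proof.
split; first by exists H, H'.
by case=> H1 [H2 D]; rewrite (proof_irrelevance _ H H1) (proof_irrelevance _ H' H2).
Qed.

Lemma DeltaQ_exists x y z w (H : al x y) :
  (exists H' : al z w, Delta Hal be (exist (fun p : A * A => al p.1 p.2) (x, y) H)
                                    (exist (fun p : A * A => al p.1 p.2) (z, w) H'))
  <-> DeltaQ be x y z w.
Proof.
split; first by case=> H' D; exists H, H'.
by case=> H1 [H' D]; exists H'; apply/DeltaQ_iff; exists H1, H'.
Qed.

Lemma DeltaQ_refl x y : al x y -> DeltaQ be x y x y.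
Proof. by move=> H; exists H, H; exact: (con_refl (Cg_con _)). Qed.

Lemma DeltaQ_sym x y z w : DeltaQ be x y z w -> DeltaQ be z w x y.
Proof. by case=> H [H' D]; exists H', H; exact: (con_sym (Cg_con _)). Qed.

Lemma DeltaQ_trans x y z w p q :
  DeltaQ be x y z w -> DeltaQ be z w p q -> DeltaQ be x y p q.
Proof.
case=> H [H' D] [H3 [H2 D2]]; exists H, H2.
rewrite (proof_irrelevance _ H3 H') in D2.
exact: (con_trans (Cg_con _) D D2).
Qed.

Lemma DeltaQ_gen u v : be u v -> DeltaQ be u u v v.
Proof. by move=> Huv; exists (con_refl Hal u), (con_refl Hal v); exact: Cg_gen. Qed.

Lemma DeltaQ_eval V (t : term ar V) (x y z w : V -> A) :
  (forall v, DeltaQ be (x v) (y v) (z v) (w v)) ->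
  DeltaQ be (eval x t) (eval y t) (eval z t) (eval w t).
Proof.
move=> Hv; elim: t => [v|f args IH] //=.
have Hxy o : al (eval x (args o)) (eval y (args o)) by case: (IH o).
have Hzw o : al (eval z (args o)) (eval w (args o)) by case: (IH o) => ? [].
pose P o := exist (fun p : A * A => al p.1 p.2) (eval x (args o), eval y (args o)) (Hxy o).
pose Q o := exist (fun p : A * A => al p.1 p.2) (eval z (args o), eval w (args o)) (Hzw o).
have D : Delta Hal be (Aop Hal P) (Aop Hal Q).
  by apply: (con_compat (Cg_con _)) => o; apply/DeltaQ_iff.
exact: (proj1 (DeltaQ_iff (proj2_sig (Aop Hal P)) (proj2_sig (Aop Hal Q))) D).
Qed.

Lemma DeltaQ_app3 d x1 y1 z1 w1 x2 y2 z2 w2 x3 y3 z3 w3 :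
  DeltaQ be x1 y1 z1 w1 -> DeltaQ be x2 y2 z2 w2 -> DeltaQ be x3 y3 z3 w3 ->
  DeltaQ be (app3 d x1 x2 x3) (app3 d y1 y2 y3) (app3 d z1 z2 z3) (app3 d w1 w2 w3).
Proof. by move=> H1 H2 H3; apply: DeltaQ_eval => i; case: (val i) => [|[|?]]. Qed.

Lemma DeltaQ_be : is_con be ->
  forall x y z w, DeltaQ be x y z w -> be x z /\ be y w.
Proof.
move=> Hbe x y z w [H [H' D]].
apply: (Delta_ind (R := fun P Q => be P.1 Q.1 /\ be P.2 Q.2)) D.
- by move=> P; split; exact: (con_refl Hbe).
- by move=> P Q [? ?]; split; exact: (con_sym Hbe).
- by move=> P Q S [H1 H2] [H3 H4]; split; [exact: (con_trans Hbe H1 H3)|exact: (con_trans Hbe H2 H4)].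
- move=> V T e f u v Hef Huv; rewrite /evp /=.
  by split; apply: (eval_con Hbe) => -[s|s] //=; exact: (con_refl Hbe).
Qed.

Lemma DeltaQ_mono (ga : A -> A -> Prop) : (forall x y, be x y -> ga x y) ->
  forall x y z w, DeltaQ be x y z w -> DeltaQ ga x y z w.
Proof.
move=> Hs x y z w [H [H' D]]; exists H, H'.
by apply: Cg_mono D => p q [? [? ?]]; split => //; split => //; exact: Hs.
Qed.

Lemma Delta_transfer (de : A -> A -> Prop) :
  (forall u v, be u v -> exists2 ga, is_con ga & ga u v /\ TC ga al de) ->
  forall x y z w, DeltaQ be x y z w -> (de x y <-> de z w).
Proof.
move=> Hcover x y z w [H [H' D]].
apply: (Delta_ind (R := fun P Q => de P.1 P.2 <-> de Q.1 Q.2)) D.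
- by [].
- by move=> P Q HPQ; split => /HPQ.
- by move=> P Q S H1 H2; split => [/H1/H2|/H2/H1].
- move=> V T e f u v Hef Huv; rewrite /evp /=.
  have [ga Hga [Huv' HTC]] := Hcover u v Huv.
  have move_ga := TC_unary (T := T) (con_refl Hga) (con_refl Hal) HTC Hef.
  by split; apply: move_ga => //; exact: (con_sym Hga).
Qed.

End DeltaQuadruples.

Section MaltsevOnClasses.
Variables (F : Type) (ar : F -> nat) (A : algebra ar).
Variables (al : A -> A -> Prop) (Hal : is_con al).
Variables (be : A -> A -> Prop) (Hbe : is_con be) (d : term ar 'I_3).

Hypothesis maltsev : forall x y, al x y -> app3 d x x y = y /\ app3 d y x x = y.

Let mal1 x y : al x y -> app3 d x x y = y. Proof. by case/maltsev. Qed.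
Let mal2 x y : al x y -> app3 d y x x = y. Proof. by case/maltsev. Qed.
Let aR := con_refl Hal.
Let aS := con_sym Hal.
Let aT := con_trans Hal.

(* Shifting the common first coordinate: (a,b) Delta (a,w) gives
   (b,b) Delta (b,w); apply d to (b,b)~(b,b), (a,b)~(a,b), (a,b)~(a,w). *)
Lemma DeltaQ_shift a b w : DeltaQ Hal be a b a w -> DeltaQ Hal be b b b w.
Proof.
move=> D; have [Hab _] := D; have [_ [Haw _]] := D.
have := DeltaQ_app3 d (DeltaQ_refl Hal be (aR b)) (DeltaQ_refl Hal be Hab) D.
by rewrite (mal2 Hab) (mal1 (aR b)) (mal1 (aT (aS Hab) Haw)).
Qed.

Definition dker (y w : A) : Prop := al y w /\ DeltaQ Hal be y y y w.

(* dker is a congruence; d supplies symmetry and transitivity. *)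
Lemma dker_con : is_con dker.
Proof.
split.
- by move=> x; split; [exact: aR|exact: DeltaQ_refl].
- move=> x y [Hxy D]; split; first exact: aS.
  have := DeltaQ_app3 d (DeltaQ_refl Hal be (aR x)) D (DeltaQ_refl Hal be (aR y)).
  by rewrite (mal1 Hxy) (mal2 (aS Hxy)).
- move=> x y z [Hxy D1] [Hyz D2]; split; first exact: aT Hxy Hyz.
  have := DeltaQ_app3 d D2 (DeltaQ_refl Hal be (aR y)) (DeltaQ_refl Hal be Hxy).
  by rewrite (mal1 (aS Hxy)) (mal1 (aR y)) (mal2 Hyz); exact: DeltaQ_trans D1.
- move=> f x y H; split; first by apply: (con_compat Hal) => i; case: (H i).
  have := @DeltaQ_eval _ _ _ _ Hal be _ (App (fun i => Var i)) x x x y.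
  by apply => i; case: (H i).
Qed.

Lemma dker_TC_be_al : TC be al dker.
Proof.
move=> t a b c e Hab Hce [HXY D1]; split.
  by apply: (eval_con Hal) => -[n|n] //=; exact: aR.
have D2 : DeltaQ Hal be (eval (env2 a c) t) (eval (env2 a e) t)
                        (eval (env2 b c) t) (eval (env2 b e) t).
  by apply: DeltaQ_eval => -[n|n] /=; [exact: DeltaQ_gen|exact: DeltaQ_refl].
have D3 : DeltaQ Hal be (eval (env2 a c) t) (eval (env2 a c) t)
                        (eval (env2 b c) t) (eval (env2 b c) t).
  by apply: DeltaQ_eval => -[n|n] /=; [exact: DeltaQ_gen|exact: DeltaQ_refl].
exact: DeltaQ_trans (DeltaQ_sym D3) (DeltaQ_trans D1 D2).
Qed.

(* With X = t(a,c),
   Y = t(a,e), X' = t(b,c), Y' = t(b,e) and K = d(Y, X, X'), both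
   (X',X') Delta (X',K) and (X',X') Delta (K,Y') follow from the
   hypothesis (X,X) Delta (X,Y); combining them with d gives
   (X',X') Delta (X',Y'). *)
Lemma dker_TC_al_be : TC al be dker.
Proof.
move=> t a b c e Hab Hce [HXY D1].
set X := eval _ t in HXY D1 *; set Y := eval _ t in HXY D1 *.
set X' := eval (env2 b c) t; set Y' := eval (env2 b e) t.
have HXX' : al X X' by apply: (eval_con Hal) => -[n|n] //=; exact: aR.
have HYY' : al Y Y' by apply: (eval_con Hal) => -[n|n] //=; exact: aR.
have HX'Y' : al X' Y' := aT (aT (aS HXX') HXY) HYY'.
have D2 : DeltaQ Hal be X X' Y Y'.
  by apply: DeltaQ_eval => -[n|n] /=; [exact: DeltaQ_refl|exact: DeltaQ_gen].
have [_ HbXY] := DeltaQ_be Hbe D1.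
pose K := app3 d Y X X'.
have HKX' : al K X'.
  by have := app3_con Hal d (aS HXY) (aR X) (aR X'); rewrite (mal1 HXX').
have HbKX' : be K X'.
  have := app3_con Hbe d (con_sym Hbe HbXY) (con_refl Hbe X) (con_refl Hbe X').
  by rewrite (mal1 HXX').
have E1 : DeltaQ Hal be X' X' K Y'.
  have := DeltaQ_app3 d D2 (DeltaQ_refl Hal be HXX') (DeltaQ_refl Hal be (aR X')).
  by rewrite (mal1 HXX') (mal1 (aR X')) (mal2 HX'Y').
have E2 : DeltaQ Hal be X' X' X' K.
  have := DeltaQ_app3 d D1 (DeltaQ_refl Hal be (aR X)) (DeltaQ_refl Hal be (aR X')).
  by rewrite (mal1 HXX').
split => //; apply: DeltaQ_sym.
have := DeltaQ_app3 d (DeltaQ_sym E2) (DeltaQ_gen Hal HbKX') (DeltaQ_sym E1).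
by rewrite (mal2 HKX') (mal1 (aT HKX' HX'Y')) (mal1 (aR X')).
Qed.

Lemma dker_transport c y w : dker y w -> al c y -> DeltaQ Hal be c y c w.
Proof.
move=> [Hyw D] Hcy.
have := DeltaQ_app3 d D (DeltaQ_refl Hal be (aR y)) (DeltaQ_refl Hal be Hcy).
by rewrite (mal1 (aS Hcy)) (mal1 (aR y)) (mal2 Hyw).
Qed.

End MaltsevOnClasses.

Section Parts.
Variables (F : Type) (ar : F -> nat) (E : identities ar) (A : algebra ar).
Hypothesis HA : in_variety E A.

Lemma difference_term_id d : is_difference_term E d -> forall x y : A, app3 d x x y = y.
Proof. by move=> Hd x y; case: (Hd A HA _ (@con_total _ _ A) x y I). Qed.

Lemma difference_term_comm (al be : A -> A -> Prop) (Hal : is_con al) (Hbe : is_con be) d :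
  is_difference_term E d -> forall a b, al a b -> be a b -> comm al be (app3 d a b b) a.
Proof.
move=> Hd a b Hab Hbe_ab; have [_ H] := Hd A HA _ (con_meet Hal Hbe) a b (conj Hab Hbe_ab).
exact: comm_mono (fun x y (H : al x y /\ be x y) => proj1 H) (fun x y H => proj2 H) _ _ H.
Qed.

Lemma weak_difference_maltsev (al : A -> A -> Prop) (Hal : is_con al) d :
  is_weak_difference_term E d -> abelian al ->
  forall x y, al x y -> app3 d x x y = y /\ app3 d y x x = y.
Proof.
move=> Hd Habel x y Hxy; have [H1 H2] := Hd A HA al Hal x y Hxy.
by split; [exact: Habel|symmetry; exact: Habel].
Qed.

Lemma difference_maltsev (al : A -> A -> Prop) (Hal : is_con al) d :
  is_difference_term E d -> abelian al ->
  forall x y, al x y -> app3 d x x y = y /\ app3 d y x x = y.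
Proof.
move=> Hd Habel x y Hxy; split; first exact: difference_term_id.
have [_ H] := Hd A HA al Hal y x (con_sym Hal Hxy).
exact: Habel.
Qed.

(* Moving the be-variable of a unary polynomial (p, p') of A(al) inside
   d(p'(.), p(.), C) stays within one [al, be]-class: this is the term
   condition for the term d(T(x1, y), T(x2, y), z), which is constant C
   when x1 = x2. *)
Lemma difference_poly_comm (al be : A -> A -> Prop) (Hal : is_con al) (Hbe : is_con be) d :
  is_difference_term E d ->
  forall (V : countType) (T : term ar (V + unit)) (e f : V -> A) u v C,
  (forall x, al (e x) (f x)) -> be u v ->
  comm al be (app3 d (eval (env2 f (fun _ => u)) T) (eval (env2 e (fun _ => u)) T) C)
             (app3 d (eval (env2 f (fun _ => v)) T) (eval (env2 e (fun _ => v)) T) C).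
Proof.
move=> Hd V T e f u v C Hef Huv.
pose lift1 (s : V + unit) : term ar (((V + V) + unit) + unit) :=
  match s with inl x => Var (inl (inl (inl x))) | inr _ => Var (inr tt) end.
pose lift2 (s : V + unit) : term ar (((V + V) + unit) + unit) :=
  match s with inl x => Var (inl (inl (inr x))) | inr _ => Var (inr tt) end.
pose s := tsubst (sel3 (tsubst lift1 T) (tsubst lift2 T) (Var (inl (inr tt)))) d.
pose par (g : V -> A) (z : (V + V) + unit) : A :=
  match z with inl (inl x) => g x | inl (inr x) => e x | inr _ => C end.
have Es g w : eval (env2 (par g) (fun _ => w)) s
              = app3 d (eval (env2 g (fun _ => w)) T) (eval (env2 e (fun _ => w)) T) C.
  by rewrite /s eval_app3 !eval_subst; congr app3; apply: eval_ext => -[?|[]].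
have := TC_countable (t := s) (a := par e) (b := par f) (c := fun _ => u) (d := fun _ => v)
  (con_refl Hal) (con_refl Hbe) (@comm_TC _ _ A al be).
rewrite !Es !(difference_term_id Hd); apply => //.
- by move=> [[x|x]|[]] /=; [exact: Hef|exact: (con_refl Hal)|exact: (con_refl Hal)].
- exact: (con_refl (comm_con _ _)).
Qed.

Lemma Delta_left_comm (al be : A -> A -> Prop) (Hal : is_con al) (Hbe : is_con be) d :
  is_difference_term E d ->
  forall a b w, DeltaQ Hal be a b a w -> comm al be b w.
Proof.
move=> Hd a b w D; have [Hab [Haw D']] := D.
have dC := comm_con al be.
(* Along Delta, second coordinates stay be-related and d(second, first, C)
   stays in one [al, be]-class. *)
have [Hbw Hd_comm] : be b w /\ comm al be (app3 d b a a) (app3 d w a a).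
  have := Delta_ind (R := fun P Q => be P.2 Q.2 /\
    forall C, comm al be (app3 d P.2 P.1 C) (app3 d Q.2 Q.1 C)) _ _ _ _ D'.
  case=> [P|P Q [H1 H2]|P Q S [H1 H2] [H3 H4]|V T e f u v Hef Huv|/= H1 /(_ a) H2] //.
  - by split=> [|C]; [exact: (con_refl Hbe)|exact: (con_refl dC)].
  - by split=> [|C]; [exact: (con_sym Hbe)|exact: (con_sym dC)].
  - by split=> [|C]; [exact: (con_trans Hbe H1 H3)|exact: (con_trans dC (H2 C) (H4 C))].
  - split; last by move=> C; exact: difference_poly_comm.
    by apply: (eval_con Hbe) => -[s|s] //=; exact: (con_refl Hbe).
(* the term condition for d(y, x, x), moving x from a to b and y from b to w *)
have := TC_countable (t := tsubst (sel3 (Var (inr tt)) (Var (inl tt)) (Var (inl tt))) d)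
  (a := fun _ => a) (b := fun _ => b) (c := fun _ : unit => b) (d := fun _ => w)
  (con_refl Hal) (con_refl Hbe) (@comm_TC _ _ A al be) (fun _ => Hab) (fun _ => Hbw).
rewrite !eval_app3 /= (difference_term_id Hd) => /(_ Hd_comm) Hbwbb.
have Hwb : al w b := con_trans Hal (con_sym Hal Haw) Hab.
exact: (con_trans dC Hbwbb (difference_term_comm Hal Hbe Hd Hwb (con_sym Hbe Hbw))).
Qed.

Lemma Delta_left_iff_comm (al be : A -> A -> Prop) (Hal : is_con al) (Hbe : is_con be) d :
  is_weak_difference_term E d -> abelian al ->
  forall b w, (exists a, DeltaQ Hal be a b a w) <-> comm be al b w.
Proof.
move=> Hd Habel b w; have mal := weak_difference_maltsev Hal Hd Habel.
split.
- case=> a /(DeltaQ_shift mal) D.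
  have cover u v : be u v -> exists2 ga, is_con ga & ga u v /\ TC ga al (comm be al).
    by move=> Huv; exists be => //; split => //; exact: comm_TC.
  by apply/(Delta_transfer cover D); exact: (con_refl (comm_con _ _)).
- move=> H; exists b.
  exact: (H _ (dker_con Hal be mal) (@dker_TC_be_al _ _ _ _ Hal be)).2.
Qed.

Lemma Delta_alpha_meet (al : A -> A -> Prop) (Hal : is_con al) d :
  is_weak_difference_term E d -> abelian al ->
  forall ga : A -> A -> Prop, is_con ga ->
  (forall x y, al x y -> ga x y) -> (forall x y, ga x y -> centralizer al x y) ->
  forall x y z w,
  DeltaQ Hal al x y z w <-> DeltaQ Hal ga x y z w /\ [/\ al x y, al x z & al x w].
Proof.
move=> Hd Habel ga Hga Hle Hcent x y z w.
have mal := weak_difference_maltsev Hal Hd Habel.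
split.
- move=> D; split; first exact: DeltaQ_mono Hle _ _ _ _ D.
  have [Hxz _] := DeltaQ_be Hal D; have [Hxy [Hzw _]] := D.
  by split => //; exact: (con_trans Hal Hxz Hzw).
- case=> D [Hxy Hxz _].
  pose w' := app3 d y x z.
  (* (x,y) Delta_{al al} (z,w'): apply d to (x,y)~(x,y), (x,x)~(x,x), (x,x)~(z,z) *)
  have D1 : DeltaQ Hal al x y z w'.
    have := DeltaQ_app3 d (DeltaQ_refl Hal al Hxy) (DeltaQ_refl Hal al (con_refl Hal x))
      (DeltaQ_gen Hal Hxz).
    by rewrite (proj1 (mal _ _ (con_refl Hal x))) (proj2 (mal _ _ Hxy)) (proj1 (mal _ _ Hxz)).
  have D2 : DeltaQ Hal ga w w w w'.
    by apply: (DeltaQ_shift mal); exact: DeltaQ_trans (DeltaQ_sym D) (DeltaQ_mono Hle D1).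
  have cover u v : ga u v -> exists2 g0, is_con g0 & g0 u v /\ TC g0 al eq.
    move=> /Hcent [g0 [Hg0 [Hc Huv]]]; exists g0 => //.
    by split => //; exact: TC_eq_of_centralizing.
  by have -> : w = w' by apply/(Delta_transfer cover D2).
Qed.

Section DifferenceTermAbelian.
Variables (al be : A -> A -> Prop) (Hal : is_con al) (Hbe : is_con be).
Variables (m : term ar 'I_3).
Hypotheses (Hm : is_difference_term E m) (Habel : abelian al).

Let mal := difference_maltsev Hal Hm Habel.

(* The canonical Delta-partner of (a,b) over c, for a be c:
   (a,b) Delta (c, m(b,a,c)); apply m to (a,b)~(a,b), (a,a)~(a,a), (a,a)~(c,c). *)
Lemma Delta_canonical a b c : al a b -> be a c -> DeltaQ Hal be a b c (app3 m b a c).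
Proof.
move=> Hab Hac.
have := DeltaQ_app3 m (DeltaQ_refl Hal be Hab) (DeltaQ_refl Hal be (con_refl Hal a))
  (DeltaQ_gen Hal Hac).
by rewrite !(difference_term_id Hm) (proj2 (mal Hab)).
Qed.

Lemma Delta_difference_forward a b c e : DeltaQ Hal be a b c e ->
  DeltaQ Hal be a b c (app3 m b a c) /\ comm al be e (app3 m b a c).
Proof.
move=> D; have [Hac _] := DeltaQ_be Hbe D; have [Hab _] := D.
have DK := Delta_canonical Hab Hac.
split=> //; exact: (Delta_left_comm Hbe Hm (DeltaQ_trans (DeltaQ_sym D) DK)).
Qed.

Lemma Delta_difference_backward a b c e : be c a -> al a b ->
  comm al be e (app3 m b a c) -> DeltaQ Hal be a b c e.
Proof.
move=> Hca Hab Hc.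
have DK := Delta_canonical Hab (con_sym Hbe Hca).
have [_ [HcK _]] := DK.
have Hker : dker Hal be (app3 m b a c) e.
  apply: (con_sym (dker_con Hal be mal)).
  exact: (Hc _ (dker_con Hal be mal) (dker_TC_al_be Hbe mal)).
exact: DeltaQ_trans DK (dker_transport mal Hker HcK).
Qed.

End DifferenceTermAbelian.

End Parts.

Theorem lemma2p1 (F : Type) (ar : F -> nat) (E : identities ar)
  (A : algebra ar) (al be : A -> A -> Prop)
  (HA : in_variety E A) (Hal : is_con al) (Hbe : is_con be) :
  (* (1) *)
  (has_difference_term E ->
   forall (a b d : A) (Hab : al a b) (Had : al a d),
     Delta Hal be (exist _ (a, b) Hab) (exist _ (a, d) Had) ->
     comm al be b d) /\
  (* (2) *)
  (has_weak_difference_term E -> abelian al ->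
   forall b d : A,
     (exists (a : A) (Hab : al a b) (Had : al a d),
        Delta Hal be (exist _ (a, b) Hab) (exist _ (a, d) Had)) <->
     comm be al b d) /\
  (* (3) *)
  (has_weak_difference_term E -> abelian al ->
   forall ga : A -> A -> Prop, is_con ga ->
     (forall x y, al x y -> ga x y) ->
     (forall x y, ga x y -> centralizer al x y) ->
     forall p q : Aalpha Hal,
       Delta Hal al p q <-> (Delta Hal ga p q /\ alphahat p q)) /\
  (* (4) *)
  (forall m : term ar 'I_3, is_difference_term E m -> abelian al ->
   forall (a b c d : A) (Hab : al a b) (Hcd : al c d),
     let P := exist (fun p : A * A => al p.1 p.2) (a, b) Hab in
     let Q := exist (fun p : A * A => al p.1 p.2) (c, d) Hcd in
     [/\ (Delta Hal be P Q ->
          (exists Hm : al c (app3 m b a c),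
             Delta Hal be P (exist _ (c, app3 m b a c) Hm))
          /\ comm al be d (app3 m b a c)),
         ((exists Hm : al c (app3 m b a c),
             Delta Hal be P (exist _ (c, app3 m b a c) Hm))
          /\ comm al be d (app3 m b a c) ->
          be c a /\ al a b /\ comm al be d (app3 m b a c))
       & (be c a /\ al a b /\ comm al be d (app3 m b a c) ->
          Delta Hal be P Q)]).
Proof.
split; [|split; [|split]].
- case=> d Hd a b w Hab Haw D.
  by apply: (Delta_left_comm HA Hbe Hd (a := a)); exists Hab, Haw.
- by case=> d Hd Habel b w; exact: (Delta_left_iff_comm HA Hal Hbe Hd Habel).
- case=> d Hd Habel ga Hga Hle Hcent [[x y] Hxy] [[z w] Hzw].
  rewrite /alphahat /= !DeltaQ_iff.
  exact: (Delta_alpha_meet HA Hal Hd Habel Hga Hle Hcent).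
- move=> m Hm Habel a b c d Hab Hcd P Q; split.
  + move/DeltaQ_iff/(Delta_difference_forward HA Hbe Hm Habel) => [DK Hc].
    by split=> //; apply/DeltaQ_exists.
  + by case=> /DeltaQ_exists/(DeltaQ_be Hbe) [Hac _] Hc; split=> //; exact: (con_sym Hbe).
  + case=> Hca [_ Hc]; apply/DeltaQ_iff.
    exact: (Delta_difference_backward HA Hal Hbe Hm Habel Hca Hab Hc).
Qed.
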